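(* Let $M$ and $N$ be positive integers with $N \le M$, and let $S=\{\vec b\in\mathbb{F}_2^M : H(\vec b)=N\}$, where $H(\vec b)$ denotes the Hamming weight. Then there exist a nonnegative integer $Q$ with $Q\le 2N\log_2 M$ and a binary $Q\times M$ matrix $\mathbf{G}$ over $\mathbb{F}_2$ such that the linear map $\vec b\mapsto \mathbf{G}\vec b$ (arithmetic mod 2) is injective on $S$.
   Context: A fermionic system with $M$ modes and $N$ particles has its particle-number-conserving Fock basis states labelled by the bitstrings in $S$ (occupation vectors of weight $N$). A ''linear (number-conserving) encoding'' into $Q$ qubits is a binary matrix $\mathbf{G}\in\mathbb{F}_2^{Q\times M}$ mapping $|\vec b\rangle\mapsto|\mathbf{G}\vec b\rangle$ that is injective on $S$; $Q$ is its qubit cost. Logarithms are base 2. *)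

From mathcomp Require Import all_boot all_algebra.
From Stdlib Require Import Reals.
Set Implicit Arguments. Unset Strict Implicit. Unset Printing Implicit Defensive.

Definition hamming_weight (M : nat) (b : 'cV['F_2]_M) : nat :=
  #|[set i : 'I_M | b i ord0 != GRing.zero]|.

Definition fixed_weight (M N : nat) : {set 'cV['F_2]_M} :=
  [set b | hamming_weight b == N].

Definition log2 (x : R) : R := (ln x / ln 2)%R.

From mathcomp Require Import all_boot all_algebra.
Import GRing.Theory.
Set Implicit Arguments. Unset Strict Implicit. Unset Printing Implicit Defensive.

(* If no nonzero vector of weight at most 2N lies in the kernel of G, then G is
   injective on weight-N vectors, since b - b' has weight at most 2N.  Such a G
   with Q rows is built one column at a time: a new column c preserves the
   property unless c = G x for a vector x of weight below 2N on the previous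
   columns, and there are at most M^(2N-1) such x, fewer than the 2^Q candidates
   for c once Q = floor(2N log2 M). *)

Section HammingWeight.
Local Open Scope ring_scope.

Definition colsupp m (x : 'cV['F_2]_m) : {set 'I_m} := [set i | x i ord0 != 0].

Lemma hamming_weightE m (x : 'cV['F_2]_m) : hamming_weight x = #|colsupp x|.
Proof. by []. Qed.

Lemma F2E (u : 'F_2) : u = (u != 0)%:R.
Proof. by apply/val_inj; case: u => -[|[|k]]. Qed.

Lemma colsupp_inj m : injective (@colsupp m).
Proof.
move=> x y exy; apply/matrixP => i j; rewrite (ord1 j) (F2E (x i ord0)) (F2E (y i ord0)).
by have := congr1 (fun A : {set _} => i \in A) exy; rewrite /= !inE => ->.
Qed.

Lemma colsuppN m (x : 'cV['F_2]_m) : colsupp (- x) = colsupp x.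
Proof. by apply/setP => i; rewrite !inE mxE oppr_eq0. Qed.

Lemma hamming_weightB m (x y : 'cV['F_2]_m) :
  (hamming_weight (x - y) <= hamming_weight x + hamming_weight y)%N.
Proof.
rewrite !hamming_weightE (leq_trans _ (leq_card_setU _ _)) // subset_leq_card //.
apply/subsetP => i; rewrite !inE !mxE; apply: contraR.
by rewrite negb_or !negbK => /andP[/eqP-> /eqP->]; rewrite subrr.
Qed.

Lemma hamming_weight_col_mx m1 m2 (a : 'cV['F_2]_m1) (b : 'cV['F_2]_m2) :
  hamming_weight (col_mx a b) = (hamming_weight a + hamming_weight b)%N.
Proof.
rewrite /hamming_weight -!sum1dep_card big_split_ord /=.
by congr (_ + _)%N; apply: eq_bigl => i; rewrite ?col_mxEu ?col_mxEd.
Qed.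

Lemma fixed_weight_full_eq m (x y : 'cV['F_2]_m) :
  x \in fixed_weight m m -> y \in fixed_weight m m -> x = y.
Proof.
have full z : z \in fixed_weight m m -> colsupp z = setT.
  rewrite inE => /eqP wz; apply/eqP.
  by rewrite eqEcard subsetT cardsT card_ord -(hamming_weightE z) wz leqnn.
by move=> /full ex /full ey; apply: colsupp_inj; rewrite ex ey.
Qed.

End HammingWeight.

Lemma card_small_sets (T : finType) k :
  (#|[set A : {set T} | #|A| <= k]| <= #|T|.+1 ^ k)%N.
Proof.
pose set_of (f : {ffun 'I_k -> option T}) := [set x | Some x \in codom f].
have set_ofE s : size s <= k ->
    set_of [ffun j : 'I_k => nth None (map Some s) j] = [set x in s].
  move=> ks; apply/setP => x; rewrite !inE; apply/codomP/idP => [[j]|xs].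
    rewrite ffunE => /esym xj; rewrite -(mem_map (@Some_inj _)).
    have [js|] := ltnP j (size (map Some s)); first by rewrite -xj mem_nth.
    by move/(nth_default None); rewrite xj.
  have xk : index x s < k by rewrite (leq_trans _ ks) ?index_mem.
  by exists (Ordinal xk); rewrite ffunE (nth_map x) ?nth_index ?index_mem.
apply: (@leq_trans #|set_of @: {: {ffun 'I_k -> option T}}|).
  apply/subset_leq_card/subsetP => A; rewrite inE cardE => kA.
  apply/imsetP; exists [ffun j : 'I_k => nth None (map Some (enum A)) j] => //.
  by rewrite set_ofE // set_enum.
by rewrite (leq_trans (leq_imset_card _ _)) // card_ffun card_option card_ord.
Qed.

Lemma card_low_weight m d :
  (#|[set x : 'cV['F_2]_m | hamming_weight x <= d]| <= m.+1 ^ d)%N.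
Proof.
have := card_small_sets 'I_m d; rewrite card_ord; apply: leq_trans.
rewrite -(card_imset _ (@colsupp_inj m)); apply/subset_leq_card/subsetP => A.
by case/imsetP => x; rewrite !inE => wx ->.
Qed.

Section KernelWeight.
Local Open Scope ring_scope.

Definition kernel_weight_gt d Q m (G : 'M['F_2]_(Q, m)) :=
  forall x : 'cV_m, x != 0 -> (hamming_weight x <= d)%N -> G *m x != 0.

Lemma kernel_weight_gt_injective Q m N (G : 'M['F_2]_(Q, m)) :
  kernel_weight_gt (N + N) G -> {in fixed_weight m N &, injective (mulmx G)}.
Proof.
move=> hG x y; rewrite !inE => /eqP wx /eqP wy eGxy.
apply/subr0_eq/eqP/negPn/negP => nxy; have := hamming_weightB x y.
by rewrite wx wy => /(hG _ nxy); rewrite mulmxBr eGxy subrr eqxx.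
Qed.

Lemma kernel_weight_gt_row_mx Q m d (G : 'M['F_2]_(Q, m)) (c : 'cV_Q) :
  kernel_weight_gt d.+1 G ->
  c \notin [set G *m x | x in [set x | (hamming_weight x <= d)%N]] ->
  kernel_weight_gt d.+1 (row_mx c G).
Proof.
move=> hG cG x; rewrite -[x]vsubmxK mul_row_col hamming_weight_col_mx.
set a := usubmx x; set b := dsubmx x.
have -> : c *m a = a 0 0 *: c by rewrite {1}[a]mx11_scalar mul_mx_scalar.
have [a0 nx wx|a1 _ wx] := eqVneq (a 0 0) 0.
  rewrite a0 scale0r add0r; apply: hG (leq_trans (leq_addl _ _) wx).
  by apply: contraNneq nx => b0; rewrite [a]mx11_scalar a0 b0 raddf0 col_mx0.
have wa : (0 < hamming_weight a)%N by rewrite card_gt0; apply/set0Pn; exists 0; rewrite inE.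
rewrite (F2E (a 0 0)) a1 scale1r; apply: contraNneq cG => /eqP.
rewrite addr_eq0 -mulmxN => /eqP ->; apply: imset_f.
by rewrite inE hamming_weightE colsuppN -ltnS (leq_trans _ wx) // -add1n leq_add2r.
Qed.

Lemma exists_kernel_weight_gt Q m d :
  (m ^ d < 2 ^ Q)%N -> exists G : 'M['F_2]_(Q, m), kernel_weight_gt d.+1 G.
Proof.
elim: m => [_|m IH md]; first by exists 0 => x; rewrite [x]flatmx0 eqxx.
have [G hG] : exists G : 'M['F_2]_(Q, m), kernel_weight_gt d.+1 G.
  by apply/IH/(leq_ltn_trans _ md); have [->|d0] := posnP d; rewrite ?expn0 ?leq_exp2r.
set F := [set G *m x | x in [set x | (hamming_weight x <= d)%N]].
have : ~: F != set0.
  rewrite -card_gt0 -(ltn_add2l #|F|) cardsC addn0 card_mx card_Fp // muln1.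
  exact: leq_ltn_trans (leq_imset_card _ _) (leq_ltn_trans (card_low_weight m d) md).
by case/set0Pn => c; rewrite inE => cF; exists (row_mx c G); apply: kernel_weight_gt_row_mx.
Qed.

End KernelWeight.

Lemma ltn_exp2_trunc_log M n : 1 < M -> n < 2 ^ trunc_log 2 (M * n).
Proof.
move=> M1; rewrite -(ltn_pmul2l (isT : 0 < 2)) -expnS.
by rewrite (leq_ltn_trans _ (trunc_log_ltn _ _)) // leq_mul2r M1 orbT.
Qed.

Lemma exists_kernel_weight_gt_log M k : 1 < M -> 0 < k ->
  exists Q (G : 'M['F_2]_(Q, M)), 2 ^ Q <= M ^ k /\ kernel_weight_gt k G.
Proof.
move=> M1 /prednK <-; set d := k.-1.
have [G hG] := exists_kernel_weight_gt (ltn_exp2_trunc_log (M ^ d) M1).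
exists (trunc_log 2 (M * M ^ d)), G; split=> //.
by rewrite expnS trunc_logP // muln_gt0 expn_gt0 (ltnW M1).
Qed.

From Stdlib Require Import Reals Lra.

Lemma INR_expn m n : INR (expn m n) = (INR m ^ n)%R.
Proof. by elim: n => // n IH; rewrite expnS -multE mult_INR IH. Qed.

Lemma INR_le_log2 Q M k : (0 < M)%N -> (expn 2 Q <= expn M k)%N ->
  (INR Q <= INR k * log2 (INR M))%R.
Proof.
have INR2 : INR 2 = 2%R by rewrite /=; lra.
move=> M0 /leP/le_INR; rewrite !INR_expn INR2 => QMk.
have ln2 : (0 < ln 2)%R by rewrite -ln_1; apply: ln_increasing; lra.
have M0R : (0 < INR M)%R by apply/lt_0_INR/ltP.
rewrite /log2; apply: (Rmult_le_reg_r (ln 2)) => //.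
have -> : (INR k * (ln (INR M) / ln 2) * ln 2 = INR k * ln (INR M))%R by field; lra.
rewrite -(ln_pow _ Rlt_0_2) -ln_pow //; apply: Rnot_lt_le => /ln_lt_inv lnMQ.
have := lnMQ (pow_lt _ k M0R) (pow_lt _ Q Rlt_0_2); lra.
Qed.

Theorem theorem1 (M N : nat) (hN : (0 < N)%N) (hNM : (N <= M)%N) :
  exists (Q : nat) (G : 'M['F_2]_(Q, M)),
    (INR Q <= 2 * INR N * log2 (INR M))%R /\
    {in fixed_weight M N &, injective (fun b : 'cV['F_2]_M => mulmx G b)}.
Proof.
have [M1|M1] := leqP M 1.
  have eM : M = 1%N by apply/eqP; rewrite eqn_leq M1 (leq_trans hN hNM).
  have eN : N = 1%N by apply/eqP; rewrite eqn_leq hN andbT -eM.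
  subst M N; exists 0%N, GRing.zero; split; first by rewrite /log2 /= ln_1; lra.
  by move=> x y wx wy _; apply: fixed_weight_full_eq.
have [Q [G [QMN hG]]] := exists_kernel_weight_gt_log M1 (ltn_addr N hN).
exists Q, G; split; last exact: kernel_weight_gt_injective.
have -> : (2 * INR N = INR (N + N))%R by rewrite -plusE plus_INR; lra.
exact: INR_le_log2 (ltnW M1) QMN.
Qed.
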